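(* Let $R$ be a commutative Noetherian ring, $M$ a finitely generated $R$-module, $X \subseteq \mathrm{Spec}(R)$ a basic set, and $\mathscr{E}$ an $R$-submodule of $\mathrm{Hom}_R(M,R)$. For any subset $S \subseteq M$ and any integer $t \in \mathbb{N}$, the set $Y_t := \{\mathfrak{p} \in X \mid \delta^{\mathscr{E}}_\mathfrak{p}(S,M) \leq t\}$ is closed in $X$ (with the subspace Zariski topology).
   Context: A subset $X \subseteq \mathrm{Spec}(R)$ is basic if, whenever the intersection of a family of primes in $X$ is a prime ideal, that intersection belongs to $X$. $\mathscr{E}_\mathfrak{p}$ is viewed inside $\mathrm{Hom}_{R_\mathfrak{p}}(M_\mathfrak{p},R_\mathfrak{p})$. A free $\mathscr{E}_\mathfrak{p}$-summand of $M_\mathfrak{p}$ is a direct summand $F$ (with complement $G$) of $M_\mathfrak{p}$, $F \cong R_\mathfrak{p}^n$, such that each coordinate of the projection $M_\mathfrak{p} \to F \cong R_\mathfrak{p}^n$ along $G$ lies in $\mathscr{E}_\mathfrak{p}$. With $\langle S\rangle$ the submodule generated by $S$, $\delta^{\mathscr{E}}_\mathfrak{p}(S,M)$ is the largest integer $n \ge 0$ such that there exists a free $\mathscr{E}_\mathfrak{p}$-summand of $M_\mathfrak{p}$ of rank $n$ contained in $\langle S\rangle_\mathfrak{p}$. *)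

From HB Require Import structures.
From mathcomp Require Import all_boot all_algebra.
Set Implicit Arguments. Unset Strict Implicit. Unset Printing Implicit Defensive.
Import GRing.Theory.
Local Open Scope ring_scope.

Section RingDefs.
Variable R : comNzRingType.

Definition is_ideal (I : R -> Prop) : Prop :=
  [/\ I 0, (forall a b, I a -> I b -> I (a + b)) & (forall r a, I a -> I (r * a))].

Definition is_prime_ideal (P : R -> Prop) : Prop :=
  [/\ is_ideal P, ~ P 1 & (forall a b, P (a * b) -> P a \/ P b)].

Definition ideal_fg (I : R -> Prop) : Prop :=
  exists s : seq R, forall r,
    I r <-> exists c : 'I_(size s) -> R, r = \sum_(i < size s) c i * s`_i.

Definition noetherian : Prop := forall I, is_ideal I -> ideal_fg I.

Definition basic_set (X : (R -> Prop) -> Prop) : Prop :=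
  (forall P, X P -> is_prime_ideal P) /\
  (forall F : (R -> Prop) -> Prop, (forall Q, F Q -> X Q) ->
     is_prime_ideal (fun r => forall Q, F Q -> Q r) ->
     X (fun r => forall Q, F Q -> Q r)).

(* Y is closed in X for the subspace Zariski topology:
   Y = X ∩ V(A) for some subset A of R. *)
Definition zariski_closed_in (X Y : (R -> Prop) -> Prop) : Prop :=
  exists A : R -> Prop, forall P, X P -> (Y P <-> (forall a, A a -> P a)).

(* equality of fractions a/s = b/t in R_p *)
Definition locR_eq (p : R -> Prop) (x y : R * R) : Prop :=
  exists w, ~ p w /\ w * (y.2 * x.1 - x.2 * y.1) = 0.

End RingDefs.

Section ModDefs.
Variables (R : comNzRingType) (M : lmodType R).

Definition fin_gen : Prop :=
  exists s : seq M, forall m,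
    exists c : 'I_(size s) -> R, m = \sum_(i < size s) c i *: s`_i.

Definition span (S : M -> Prop) (m : M) : Prop :=
  exists s : seq M, (forall x, x \in s -> S x) /\
    exists c : 'I_(size s) -> R, m = \sum_(i < size s) c i *: s`_i.

Definition is_Rlinear (f : M -> R) : Prop :=
  forall a x y, f (a *: x + y) = a * f x + f y.

Definition hom_submodule (E : (M -> R) -> Prop) : Prop :=
  [/\ (forall f, E f -> is_Rlinear f),
      E (fun _ => 0),
      (forall f g, E f -> E g -> E (fun x => f x + g x)) &
      (forall a f, E f -> E (fun x => a * f x))].

(* An element m/s of M_p is represented by a pair (m, s) with s ∉ p;
   an element e/u of E_p (e ∈ E, u ∉ p) acts on M_p as the
   R_p-linear map m/s |-> e(m)/(u s). *)
Definition Ep_apply (phi : (M -> R) * R) (x : M * R) : R * R :=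
  (phi.1 x.1, phi.2 * x.2).

(* There is a free E_p-summand of M_p of rank n contained in <S>_p.
   Such a summand F (with complement G, F ≅ R_p^n) is the same as a split
   pair  R_p^n --iota--> M_p --pi--> R_p^n,  pi ∘ iota = id, with
   F = im iota, G = ker pi;  iota is given by the images x_j of the standard
   basis (F ⊆ <S>_p iff each x_j ∈ <S>_p), and pi by its coordinates
   phi_i, which are required to lie in E_p.  pi ∘ iota = id reads
   phi_i(x_j) = delta_ij in R_p. *)
Definition free_E_summand (p : R -> Prop) (E : (M -> R) -> Prop)
    (S : M -> Prop) (n : nat) : Prop :=
  exists (x : 'I_n -> M * R) (phi : 'I_n -> (M -> R) * R),
    [/\ (forall j, span S (x j).1 /\ ~ p (x j).2),
        (forall i, E (phi i).1 /\ ~ p (phi i).2) &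
        (forall i j, locR_eq p (Ep_apply (phi i) (x j)) ((i == j)%:R, 1))].

(* delta^E_p(S,M) <= t, where delta is the largest such rank *)
Definition delta_le (p : R -> Prop) (E : (M -> R) -> Prop) (S : M -> Prop)
    (t : nat) : Prop :=
  forall n, free_E_summand p E S n -> (n <= t)%N.

End ModDefs.

(* A free E_p-summand of rank n inside <S>_p is given by finitely many
   fractions and finitely many equalities of fractions in R_p, involving
   finitely many elements outside p in total.  Their product s lies
   outside p, and the same data is a free E_q-summand for every prime q
   avoiding s.  Hence {p | delta_p > t} is open, and its complement Y_t is
   closed. *)

From mathcomp Require Import all_boot all_algebra.
From Stdlib Require Import Classical.
Import GRing.Theory.
Local Open Scope ring_scope.

Section PrimeComplement.
Variables (R : comNzRingType) (q : R -> Prop).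
Hypothesis q_prime : is_prime_ideal q.

Lemma prime_notinM (a b : R) : ~ q (a * b) <-> ~ q a /\ ~ q b.
Proof.
case: q_prime => [[_ _ qM] _ q_split]; split.
  by move=> nqab; split=> qa; apply: nqab; [rewrite mulrC|]; apply: qM.
by case=> nqa nqb /q_split [].
Qed.

Lemma prime_notin_prod (I : finType) (f : I -> R) :
  ~ q (\prod_i f i) <-> forall i, ~ q (f i).
Proof.
split=> [nq_prod i | nq_f].
  by move: nq_prod; rewrite (bigD1 i) //= => /prime_notinM [].
apply: (big_ind (fun x => ~ q x)) => //; first by case: q_prime.
by move=> a b nqa nqb; apply/prime_notinM.
Qed.

End PrimeComplement.

Lemma zariski_closed_in_compl_open (R : comNzRingType)
    (X U : (R -> Prop) -> Prop) :
  (forall P, X P -> is_prime_ideal P) ->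
  (forall p, is_prime_ideal p -> U p ->
     exists2 s, ~ p s & forall q, is_prime_ideal q -> ~ q s -> U q) ->
  zariski_closed_in X (fun p => ~ U p).
Proof.
move=> X_prime U_open.
exists (fun a => forall q, is_prime_ideal q -> ~ q a -> U q) => P XP.
have P_prime := X_prime P XP; split.
  by move=> nUP a Ua; apply: NNPP => nPa; exact/nUP/(Ua P).
by move=> PV UP; have [s nPs Us] := U_open P P_prime UP; exact/nPs/PV.
Qed.

Lemma free_E_summand_spreads {R : comNzRingType} {M : lmodType R}
    {E : (M -> R) -> Prop} {S : M -> Prop} {p : R -> Prop} {n : nat} :
  is_prime_ideal p -> free_E_summand p E S n ->
  exists2 s, ~ p s & forall q, is_prime_ideal q -> ~ q s ->
    free_E_summand q E S n.
Proof.
move=> p_prime [x [phi [x_ok phi_ok phi_x]]].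
have [w w_ok] := fin_all_exists (fun ij : 'I_n * 'I_n => phi_x ij.1 ij.2).
exists (\prod_j (x j).2 * \prod_i (phi i).2 * \prod_ij w ij); last first.
  move=> q q_prime.
  case/prime_notinM => // /prime_notinM [] // /prime_notin_prod nq_x.
  move=> /prime_notin_prod nq_phi /prime_notin_prod nq_w.
  exists x, phi; split=> [j | i | i j].
  - by split; [case: (x_ok j) | apply: nq_x].
  - by split; [case: (phi_ok i) | apply: nq_phi].
  - by exists (w (i, j)); split; [apply: nq_w | case: (w_ok (i, j))].
apply/prime_notinM => //; split; last first.
  by apply/prime_notin_prod => // ij; case: (w_ok ij).
apply/prime_notinM => //; split.
- by apply/prime_notin_prod => // j; case: (x_ok j).
- by apply/prime_notin_prod => // i; case: (phi_ok i).
Qed.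

Theorem lemma4p1 (R : comNzRingType) (M : lmodType R)
    (X : (R -> Prop) -> Prop) (E : (M -> R) -> Prop) (S : M -> Prop) (t : nat) :
  noetherian R -> fin_gen M -> basic_set X -> hom_submodule E ->
  zariski_closed_in X (fun p => delta_le p E S t).
Proof.
move=> _ _ [X_prime _] _.
pose exceeds p := exists2 n, free_E_summand p E S n & (t < n)%N.
have delta_leE p : delta_le p E S t <-> ~ exceeds p.
  split=> [le_t [n En lt_tn] | nexc n En].
    by move: (le_t n En); rewrite leqNgt lt_tn.
  by rewrite leqNgt; apply/negP => lt_tn; apply: nexc; exists n.
have [A closedA] : zariski_closed_in X (fun p => ~ exceeds p).
  apply: zariski_closed_in_compl_open => // p p_prime [n En lt_tn].
  have [s nps s_spreads] := free_E_summand_spreads p_prime En.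
  by exists s => // q q_prime nqs; exists n => //; apply: s_spreads.
by exists A => P XP; rewrite delta_leE; apply: closedA.
Qed.
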